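(* Let $d,m\in\mathbb{N}$ and let $\overline{\omega}_N\subset S^d$ be a strongly $m$-sharp configuration. Then $\mathbf{x}\cdot\mathbf{y}\ne-1$ for all $\mathbf{x},\mathbf{y}\in\overline{\omega}_N$; i.e., $\overline{\omega}_N$ contains no pair of antipodal points.
   Context: $S^d$ is the unit sphere in $\mathbb{R}^{d+1}$ and $\sigma_d$ its normalized surface measure. A spherical $n$-design is a configuration with $\frac1N\sum_i p(\mathbf{x}_i)=\int_{S^d}p\,d\sigma_d$ for all polynomials $p$ on $\mathbb{R}^{d+1}$ of degree $\le n$. A configuration of $N$ distinct points is $m$-sharp if it is a spherical $(2m-1)$-design and exactly $m$ distinct dot products occur between distinct points; strongly $m$-sharp if moreover it is a spherical $2m$-design. *)

From HB Require Import structures.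
From mathcomp Require Import all_boot all_order all_algebra.
From mathcomp Require Import reals.
From mathcomp Require Import mpoly.
Unset Printing Implicit Defensive.
Import Order.TTheory GRing.Theory Num.Theory.
Local Open Scope ring_scope.

(* Points of R^(d+1) are functions 'I_(d+1) -> R; a configuration of N points
   is a family x : 'I_N -> ('I_(d+1) -> R). *)

Definition dotp (R : realType) (n : nat) (u v : 'I_n -> R) : R :=
  \sum_(k < n) u k * v k.

Definition on_sphere (R : realType) (d : nat) (u : 'I_d.+1 -> R) : Prop :=
  dotp R d.+1 u u = 1.

Definition odd_dfact (b : nat) : nat := \prod_(i < b) (2 * i + 1)%N.

(* Moment of the monomial x^a with respect to the normalized surface
   measure sigma_d on S^d (subset of R^(d+1)):
     int_{S^d} x^a dsigma_d = 0 if some a_i is odd, and otherwise, with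
     a_i = 2 b_i and |b| = sum b_i,
       prod_i (2 b_i - 1)!! / prod_{j < |b|} (d + 1 + 2 j). *)
Definition sphere_moment (R : realType) (d : nat) (a : 'X_{1..d.+1}) : R :=
  if [forall i, ~~ odd (a i)] then
    (\prod_(i < d.+1) (odd_dfact ((a i)./2))%:R) /
    (\prod_(j < (mdeg a)./2) (d.+1 + 2 * j)%:R)
  else 0.

(* integral of a polynomial over S^d against sigma_d (by linearity) *)
Definition sphere_int (R : realType) (d : nat) (p : {mpoly R[d.+1]}) : R :=
  \sum_(a <- msupp p) p@_a * sphere_moment R d a.

Definition spherical_design (R : realType) (d t N : nat)
    (x : 'I_N -> 'I_d.+1 -> R) : Prop :=
  forall p : {mpoly R[d.+1]}, (msize p <= t.+1)%N ->
    N%:R^-1 * \sum_(i < N) p.@[x i] = sphere_int R d p.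

Definition inner_products (R : realType) (d N : nat)
    (x : 'I_N -> 'I_d.+1 -> R) : seq R :=
  undup [seq dotp R d.+1 (x ij.1) (x ij.2) | ij <- enum [pred ij : 'I_N * 'I_N | ij.1 != ij.2]].

Definition configuration (R : realType) (d N : nat)
    (x : 'I_N -> 'I_d.+1 -> R) : Prop :=
  injective x /\ (forall i, on_sphere R d (x i)).

Definition m_sharp (R : realType) (d m N : nat) (x : 'I_N -> 'I_d.+1 -> R) : Prop :=
  [/\ configuration R d N x, spherical_design R d (2 * m).-1 N x
    & size (inner_products R d N x) = m].

Definition strongly_m_sharp (R : realType) (d m N : nat)
    (x : 'I_N -> 'I_d.+1 -> R) : Prop :=
  m_sharp R d m N x /\ spherical_design R d (2 * m) N x.

From HB Require Import structures.
From mathcomp Require Import all_boot all_order all_algebra.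
From mathcomp Require Import reals.
From mathcomp Require Import mpoly.
From mathcomp Require Import ring zify.
From Stdlib Require Import FunctionalExtensionality.
Import Order.TTheory GRing.Theory Num.Theory.
Local Open Scope ring_scope.

(* Fix a point y = x_i of the configuration.  For every polynomial g the
   operator T g = (1 - t^2) g' - d t g satisfies int_{S^d} (T g)(y.x) dsigma = 0:
   on the zonal moments c_k = int (y.x)^k this is the recursion
   (d + 1 + k) c_(k+2) = (k + 1) c_k, obtained by integrating by parts.
   If x_i.x_j = -1, let q vanish at the m - 1 other inner products and put
   g = (t + 1) q^2, of degree 2m.  Then T g vanishes at every inner product
   (q^2 has double roots, and 1 - t^2 vanishes at -1), so averaging T g(x_i.x_k)
   over k with the 2m-design property leaves only the term k = i:
   0 = (T g)(1) = -2 d q(1)^2.  Hence q(1) = 0, i.e. two distinct points of the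
   sphere would have inner product 1. *)

Section SphereIntegral.
Variables (R : realType) (d : nat).
Local Notation n := d.+1.
Implicit Types (p : {mpoly R[n]}) (a b : 'X_{1..n}).

Lemma sphere_intE p (s : seq 'X_{1..n}) : uniq s -> {subset msupp p <= s} ->
  sphere_int R d p = \sum_(a <- s) p@_a * sphere_moment R d a.
Proof.
move=> s_uniq supp_s; rewrite /sphere_int [RHS](bigID (mem (msupp p))) /=.
rewrite [X in _ + X]big1 ?addr0 => [|a]; last first.
  by rewrite -mcoeff_eq0 => /eqP ->; rewrite mul0r.
rewrite -[RHS]big_filter; apply/perm_big/uniq_perm; rewrite ?filter_uniq //.
by move=> a; rewrite mem_filter andb_idr //; apply: supp_s.
Qed.

Lemma sphere_int_is_scalar : scalar (sphere_int R d).
Proof.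
move=> c p q; set s := undup (msupp p ++ msupp q).
have s_uniq : uniq s by apply: undup_uniq.
have sub_p : {subset msupp p <= s} by move=> a ha; rewrite mem_undup mem_cat ha.
have sub_q : {subset msupp q <= s} by move=> a ha; rewrite mem_undup mem_cat ha orbT.
have sub_pq : {subset msupp (c *: p + q) <= s}.
  by move=> a /msuppD_le; rewrite mem_cat => /orP [/msuppZ_le /sub_p|/sub_q].
rewrite !(sphere_intE _ _ s_uniq) //.
rewrite mulr_sumr -big_split /=; apply: eq_bigr => a _.
by rewrite mcoeffD mcoeffZ mulrDl mulrA.
Qed.

HB.instance Definition _ :=
  GRing.isLinear.Build R {mpoly R[n]} R *%R (sphere_int R d) sphere_int_is_scalar.

Lemma sphere_intX a : sphere_int R d 'X_[a] = sphere_moment R d a.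
Proof. by rewrite /sphere_int msuppX big_seq1 mcoeffX eqxx mul1r. Qed.

Lemma sphere_moment_odd a i : odd (a i) -> sphere_moment R d a = 0.
Proof.
by move=> odd_ai; rewrite /sphere_moment; case: forallP => // /(_ i); rewrite odd_ai.
Qed.

Lemma odd_dfactS k : odd_dfact k.+1 = (odd_dfact k * (2 * k + 1))%N.
Proof. by rewrite /odd_dfact big_ord_recr. Qed.

Lemma sphere_moment_addU2 b i :
  (n + mdeg b)%:R * sphere_moment R d (b + U_(i) + U_(i))%MM =
  (b i).+1%:R * sphere_moment R d b.
Proof.
have odd_b2 j : odd ((b + U_(i) + U_(i))%MM j) = odd (b j).
  by rewrite !mnmDE mnm1E; case: (i == j); rewrite ?addn0 //= !addn1 /= negbK.
rewrite /sphere_moment (eq_forallb (fun j => congr1 negb (odd_b2 j))).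
case: forallP => [even_b|]; last by rewrite !mulr0.
have even_deg : ~~ odd (mdeg b).
  by rewrite mdegE; elim/big_ind: _ => // k l /negbTE ok /negbTE ol; rewrite oddD ok ol.
have num_b2 : \prod_(j < n) (odd_dfact ((b + U_(i) + U_(i))%MM j)./2)%:R =
    (b i).+1%:R * \prod_(j < n) (odd_dfact (b j)./2)%:R :> R.
  rewrite (bigD1 i) //= [in RHS](bigD1 i) //= mulrA; congr (_ * _).
    rewrite !mnmDE mnm1E eqxx !addn1 /= odd_dfactS natrM mulrC.
    by rewrite mul2n even_halfK ?addn1 // even_b.
  by apply: eq_bigr => j ji; rewrite !mnmDE mnm1E eq_sym (negbTE ji) !addn0.
have deg_b2 : (mdeg (b + U_(i) + U_(i))%MM)./2 = (mdeg b)./2.+1.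
  by rewrite !mdegD mdeg1 !addn1.
rewrite num_b2 deg_b2 [\prod_(j < (mdeg b)./2.+1) _]big_ord_recr /= mul2n even_halfK //.
set D := \prod_(j < (mdeg b)./2) _.
have D_neq0 : D != 0 by apply/prodf_neq0 => j _; rewrite pnatr_eq0 addSn.
by field; rewrite D_neq0 nat1r -natrD pnatr_eq0 addSn.
Qed.

Lemma sphere_moment_shift a i :
  (d + mdeg a)%:R * sphere_moment R d (a + U_(i))%MM =
  (a i)%:R * sphere_moment R d (a - U_(i))%MM.
Proof.
case ai: (a i) => [|k].
  by rewrite mul0r (@sphere_moment_odd _ i) ?mulr0 // mnmDE mnm1E eqxx ai.
have -> : a = (a - U_(i) + U_(i))%MM.
  apply/mnmP => j; rewrite mnmDE mnmBE mnm1E.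
  by case: eqP => [<-|_]; rewrite ?ai ?subn0 ?addn0 // subn1 addn1.
rewrite mdegD mdeg1 addnA addn1 sphere_moment_addU2 mnmBE mnm1E eqxx ai subn1.
by rewrite addmK.
Qed.

Lemma sphere_int_mulX_homog k p i : p \is k.-homog ->
  (d + k)%:R * sphere_int R d ('X_i * p) = sphere_int R d p^`M(i).
Proof.
move=> /dhomog_mf p_homog.
rewrite {1 2}(mpolyE p) [X in sphere_int _ _ X]mulr_sumr.
rewrite (raddf_sum (mderiv i)) !(raddf_sum (sphere_int R d)) mulr_sumr /=.
rewrite big_seq [RHS]big_seq; apply: eq_bigr => a supp_a.
rewrite -scalerAr -mpolyXD linearZZ /= mderivX scalerA !scalarZ /= !sphere_intX.
by rewrite mulrCA -(p_homog a supp_a) addmC sphere_moment_shift mulrA [_ * _%:R]mulrC.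
Qed.

End SphereIntegral.

Section SteinOperator.
Variables (R : comNzRingType) (d : nat).
Implicit Types (p : {poly R}) (a : R).

(* With w(t) = (1 - t^2)^((d-2)/2), the density of y.x for x uniform on S^d,
   (stein_op p) w is the derivative of (1 - t^2)^(d/2) p: this is why its zonal
   integral vanishes. *)
Definition stein_op p : {poly R} := (1 - 'X^2) * p^`() - d%:R *: ('X * p).

Lemma stein_op_is_linear : linear stein_op.
Proof. by move=> c p q; rewrite /stein_op derivD derivZ -!mul_polyC; ring. Qed.

HB.instance Definition _ :=
  GRing.isLinear.Build R {poly R} {poly R} *:%R stein_op stein_op_is_linear.

Lemma stein_opXn k :
  stein_op 'X^k = k%:R *: 'X^(k.-1) - (k + d)%:R *: 'X^(k.+1).
Proof.
rewrite /stein_op derivXn -!mul_polyC !rmorph_nat.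
case: k => [|k]; first by rewrite mulr0n add0n; ring.
by rewrite -mulr_natl natrD !exprS expr0; ring.
Qed.

Lemma horner_stein_op p a :
  (stein_op p).[a] = (1 - a ^+ 2) * p^`().[a] - d%:R * (a * p.[a]).
Proof. by rewrite /stein_op !hornerE. Qed.

Lemma size_stein_op p : (size (stein_op p) <= (size p).+1)%N.
Proof.
have [->|p_neq0] := eqVneq p 0; first by rewrite linear0 size_poly0.
have size_p_gt0 : (0 < size p)%N by rewrite size_poly_gt0.
have size_p' : (size p^`() <= (size p).-1)%N := size_poly _ _.
have size_1X2 : (size (1 - 'X^2 : {poly R})%R <= 3)%N.
  by apply: leq_trans (size_polyD _ _) _; rewrite size_polyN size_polyXn size_poly1.
rewrite /stein_op; apply: leq_trans (size_polyD _ _) _.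
rewrite size_polyN geq_max; apply/andP; split.
  apply: leq_trans (size_polyMleq _ _) _; rewrite -subn1 leq_subLR.
  by apply: leq_trans (leq_add size_1X2 size_p') _; rewrite !addSn add0n !ltnS prednK.
apply: leq_trans (size_scale_leq _ _) _; apply: leq_trans (size_polyMleq _ _) _.
by rewrite size_polyX.
Qed.

Lemma horner_stein_op1 p : (stein_op p).[1] = - (d%:R * p.[1]).
Proof. by rewrite horner_stein_op expr1n subrr mul0r sub0r mul1r. Qed.

Lemma root_stein_op_XaddC_sqr q a : a = -1 \/ root q a ->
  root (stein_op (('X + 1) * q ^+ 2)) a.
Proof.
rewrite /root horner_stein_op expr2 !(derivM, derivD, derivX, derivC).
rewrite !(hornerM, hornerD, hornerX, hornerC).
by case=> [->|/eqP ->]; apply/eqP; ring.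
Qed.

End SteinOperator.

Section ZonalPolynomials.
Variables (R : realType) (d : nat) (y : 'I_d.+1 -> R).
Local Notation n := d.+1.

Definition dotpX : {mpoly R[n]} := \sum_(r < n) y r *: 'X_r.

Definition zonal (g : {poly R}) : {mpoly R[n]} := horner_alg dotpX g.

HB.instance Definition _ := GRing.LRMorphism.copy zonal (horner_alg dotpX).

Lemma zonalXn k : zonal 'X^k = dotpX ^+ k.
Proof. by rewrite rmorphXn /= /zonal horner_algX. Qed.

Lemma dotpXn_homog k : dotpX ^+ k \is k.-homog.
Proof.
have dotpX_homog : dotpX \is 1.-homog.
  apply: rpred_sum => r _; apply: rpredZ.
  by apply/dhomogP => a; rewrite msuppX inE => /eqP ->; apply: mdeg1.
by have := dhomogMn k dotpX_homog; rewrite mul1n.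
Qed.

Lemma mderiv_dotpX i : dotpX^`M(i) = (y i)%:MP.
Proof.
rewrite raddf_sum (bigD1 i) //= big1 ?addr0 => [|r ri]; rewrite linearZZ /= mderivX.
  by rewrite mnm1E eqxx scale1r -[X in (X - _)%MM]add0m addmK mpolyX0 -alg_mpolyC.
by rewrite mnm1E (negbTE ri) scale0r scaler0.
Qed.

Lemma mderiv_dotpXn k i : (dotpX ^+ k.+1)^`M(i) = (k.+1%:R * y i) *: dotpX ^+ k.
Proof.
elim: k => [|k IHk]; first by rewrite expr1 expr0 mderiv_dotpX mul1r alg_mpolyC.
rewrite exprS mderivM IHk mderiv_dotpX -scalerAr -exprS mul_mpolyC -scalerDl.
by rewrite [k.+2%:R]mulrS mulrDl mul1r.
Qed.

Lemma meval_zonal g v : (zonal g).@[v] = g.[dotp R n y v].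
Proof.
elim/poly_ind: g => [|g c IHg]; first by rewrite rmorph0 meval0 horner0.
rewrite rmorphD rmorphM /= /zonal horner_algX horner_algC -/(zonal g).
rewrite mevalD mevalM IHg hornerMXaddC alg_mpolyC mevalC; congr (_ * _ + _).
by rewrite /dotpX raddf_sum; apply: eq_bigr => r _ /=; rewrite mevalZ mevalXU.
Qed.

Lemma msize_zonal g : (msize (zonal g) <= size g)%N.
Proof.
rewrite -[g in zonal g]coefK poly_def rmorph_sum /=.
apply: leq_trans; first exact: mmeasure_sum.
apply/bigmax_leqP => k _.
rewrite linearZ /= mulr_algl zonalXn; apply: leq_trans (msizeZ_le _ _) _.
have /dhomog_mf deg_k := dotpXn_homog k.
by rewrite msizeE; apply/bigmax_leqP_seq => a supp_a _; rewrite deg_k.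
Qed.

Lemma sphere_int_dotpX : sphere_int R d dotpX = 0.
Proof.
rewrite raddf_sum big1 // => r _ /=; rewrite scalarZ /= sphere_intX.
by rewrite (@sphere_moment_odd _ _ _ r) ?mulr0 // mnm1E eqxx.
Qed.

Hypothesis y_on_sphere : on_sphere R d y.

Lemma sphere_int_dotpXnSS k : (n + k)%:R * sphere_int R d (dotpX ^+ k.+2) =
  k.+1%:R * sphere_int R d (dotpX ^+ k).
Proof.
have -> : dotpX ^+ k.+2 = \sum_(r < n) y r *: ('X_r * dotpX ^+ k.+1).
  by rewrite exprS {1}/dotpX mulr_suml; apply: eq_bigr => r _; rewrite -scalerAl.
rewrite raddf_sum mulr_sumr /=.
have := y_on_sphere; rewrite /on_sphere /dotp => sum_y2.
transitivity (\sum_(r < n) k.+1%:R * sphere_int R d (dotpX ^+ k) * (y r * y r)).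
  apply: eq_bigr => r _; rewrite scalarZ /= mulrCA addSnnS.
  rewrite sphere_int_mulX_homog ?dotpXn_homog // mderiv_dotpXn scalarZ /=; ring.
by rewrite -mulr_sumr sum_y2 mulr1.
Qed.

Lemma sphere_int_zonal_stein g : sphere_int R d (zonal (stein_op R d g)) = 0.
Proof.
rewrite -[g]coefK poly_def !raddf_sum big1 // => k _ /=.
rewrite linearZZ /= stein_opXn linearZ /= mulr_algl scalarZ /= raddfB /= !linearZ /=.
rewrite !mulr_algl !zonalXn raddfB /= !scalarZ /=.
case: {k}(nat_of_ord k) => [|k]; first by rewrite expr1 sphere_int_dotpX mul0r; ring.
by rewrite addSnnS addnC sphere_int_dotpXnSS subrr mulr0.
Qed.

End ZonalPolynomials.

Lemma on_sphere_dotp_eq1 {R : realType} {d : nat} {u v : 'I_d.+1 -> R} :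
  on_sphere R d u -> on_sphere R d v -> dotp R d.+1 u v = 1 -> u = v.
Proof.
rewrite /on_sphere => u1 v1 uv1.
have sum_sqr0 : \sum_(r < d.+1) (u r - v r) ^+ 2 = 0.
  transitivity (dotp R d.+1 u u - 2 * dotp R d.+1 u v + dotp R d.+1 v v).
    by rewrite /dotp mulr_sumr -sumrB -big_split /=; apply: eq_bigr => r _; ring.
  by rewrite u1 v1 uv1; ring.
apply: functional_extensionality => r; apply/eqP; rewrite -subr_eq0 -sqrf_eq0.
by rewrite (psumr_eq0P (fun r _ => sqr_ge0 (u r - v r)) sum_sqr0).
Qed.

Section InnerProducts.
Variables (R : realType) (d N : nat) (x : 'I_N -> 'I_d.+1 -> R).

Lemma mem_inner_products k l :
  k != l -> dotp R d.+1 (x k) (x l) \in inner_products R d N x.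
Proof. by move=> kl; rewrite mem_undup; apply/mapP; exists (k, l); rewrite ?mem_enum. Qed.

Lemma inner_products_neq1 : configuration R d N x -> 1 \notin inner_products R d N x.
Proof.
case=> x_inj x_sphere; rewrite mem_undup; apply/mapP => -[[k l]].
rewrite mem_enum inE /= => kl /esym /(on_sphere_dotp_eq1 (x_sphere k) (x_sphere l)).
by move/x_inj/eqP; rewrite (negbTE kl).
Qed.

Lemma design_zonal_sum t i (G : {poly R}) :
  spherical_design R d t N x -> (size G <= t.+1)%N ->
  \sum_(k < N) G.[dotp R d.+1 (x i) (x k)] = N%:R * sphere_int R d (zonal R d (x i) G).
Proof.
move=> design size_G; rewrite -design; last exact: leq_trans (msize_zonal _ _ _ _) size_G.
have N_neq0 : N%:R != 0 :> R by rewrite pnatr_eq0 -lt0n (leq_ltn_trans _ (ltn_ord i)).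
by rewrite mulrA mulfV // mul1r; apply: eq_bigr => k _; rewrite meval_zonal.
Qed.

Lemma design_stein_root1 t i (g : {poly R}) : (0 < d)%N ->
  spherical_design R d t N x -> on_sphere R d (x i) -> (size g <= t)%N ->
  {in inner_products R d N x, forall a, root (stein_op R d g) a} -> g.[1] = 0.
Proof.
move=> d_gt0 design xi_sphere size_g stein_root.
have size_stein : (size (stein_op R d g) <= t.+1)%N.
  by apply: leq_trans (size_stein_op _ _ _) _; rewrite ltnS.
have := design_zonal_sum t i _ design size_stein.
rewrite sphere_int_zonal_stein // mulr0 (bigD1 i) //= big1 => [|k ki]; last first.
  by apply/eqP/stein_root/mem_inner_products; rewrite eq_sym.
rewrite addr0 xi_sphere horner_stein_op1 => /eqP.
by rewrite oppr_eq0 mulf_eq0 pnatr_eq0 eqn0Ngt d_gt0 => /eqP.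
Qed.

End InnerProducts.

Theorem lemma3p4 (R : realType) (d m N : nat) (x : 'I_N -> 'I_d.+1 -> R) :
  (1 <= d)%N -> (1 <= m)%N ->
  strongly_m_sharp R d m N x ->
  forall i j : 'I_N, dotp R d.+1 (x i) (x j) <> -1.
Proof.
move=> d_gt0 m_gt0 [[x_conf _ size_A] design] i j dot_ij.
have two_neq0 : (1 + 1 : R) != 0 by rewrite paddr_eq0 ?ler01 // oner_eq0.
have [ij|i_neq_j] := eqVneq i j.
  by move: dot_ij; rewrite -ij (x_conf.2 i) => /eqP; rewrite -addr_eq0 (negbTE two_neq0).
set A := inner_products R d N x.
have A_N1 : -1 \in A by rewrite -dot_ij mem_inner_products.
set q := \prod_(a <- rem (-1) A) ('X - a%:P).
have size_q : size q = m by rewrite size_prod_XsubC size_rem // size_A prednK.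
have size_g : (size (('X + 1) * q ^+ 2)%R <= 2 * m)%N.
  apply: leq_trans (size_polyMleq _ _) _; rewrite -polyC1 size_XaddC.
  have := size_exp_leq q 2; rewrite size_q; lia.
have g_root : {in A, forall a, root (stein_op R d (('X + 1) * q ^+ 2)) a}.
  move=> a Aa; apply: root_stein_op_XaddC_sqr.
  have [->|a_neqN1] := eqVneq a (-1); [by left | right].
  by rewrite root_prod_XsubC mem_rem_uniq ?undup_uniq // inE a_neqN1.
have := @design_stein_root1 R d N x _ i _ d_gt0 design (x_conf.2 i) size_g g_root.
rewrite hornerM horner_exp hornerD hornerX hornerC => /eqP.
rewrite mulf_eq0 (negbTE two_neq0) expf_eq0 /= -/(root q 1) root_prod_XsubC => /mem_rem.
by apply/negP; apply: inner_products_neq1.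
Qed.
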